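(* Let $T^{(0)},T^{(1)}$ be closed tetrahedra with vertices $P^{(0)}_1,\dots,P^{(0)}_4$ and $P^{(1)}_1,\dots,P^{(1)}_4$ respectively. Then $$d_{\mathcal H}(T^{(0)},T^{(1)})\le\min_{\wp}\max_{1\le i\le4}|P^{(0)}_i-P^{(1)}_{\wp(i)}|,$$ where the minimum runs over permutations $\wp$ of $\{1,2,3,4\}$. Moreover, if both $T^{(0)},T^{(1)}$ are contained in $B_R(0)$ and have inradius greater than $r_1>0$, there is a constant $A_1>0$ depending only on $R$ and $r_1$ such that $$\min_{\wp}\max_{1\le i\le4}|P^{(0)}_i-P^{(1)}_{\wp(i)}|\le A_1\,d_{\mathcal H}(T^{(0)},T^{(1)}).$$
   Context: $d_{\mathcal H}$ denotes the Hausdorff distance between compact subsets of $\mathbb{R}^3$; $B_R(0)$ is the open ball of radius $R$ centered at the origin. *)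

From Stdlib Require Import Reals Lra.
Open Scope R_scope.

Definition pt : Type := (R * R * R)%type.

Definition px (p : pt) : R := fst (fst p).
Definition py (p : pt) : R := snd (fst p).
Definition pz (p : pt) : R := snd p.

Definition dist3 (p q : pt) : R :=
  sqrt ((px p - px q) ^ 2 + (py p - py q) ^ 2 + (pz p - pz q) ^ 2).
Definition norm3 (p : pt) : R := sqrt (px p ^ 2 + py p ^ 2 + pz p ^ 2).

(* Vertices of a tetrahedron are indexed by 0,1,2,3 (i.e. 1..4 of the paper). *)
Definition vertices := nat -> pt.

Definition tetra (P : vertices) (x : pt) : Prop :=
  exists l : nat -> R,
    (forall i, (i < 4)%nat -> 0 <= l i) /\
    l 0%nat + l 1%nat + l 2%nat + l 3%nat = 1 /\
    px x = l 0%nat * px (P 0%nat) + l 1%nat * px (P 1%nat)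
         + l 2%nat * px (P 2%nat) + l 3%nat * px (P 3%nat) /\
    py x = l 0%nat * py (P 0%nat) + l 1%nat * py (P 1%nat)
         + l 2%nat * py (P 2%nat) + l 3%nat * py (P 3%nat) /\
    pz x = l 0%nat * pz (P 0%nat) + l 1%nat * pz (P 1%nat)
         + l 2%nat * pz (P 2%nat) + l 3%nat * pz (P 3%nat).

Definition det3 (u v w : pt) : R :=
  px u * (py v * pz w - pz v * py w)
  - py u * (px v * pz w - pz v * px w)
  + pz u * (px v * py w - py v * px w).

Definition vsub (p q : pt) : pt := (px p - px q, py p - py q, pz p - pz q).

Definition nondegenerate (P : vertices) : Prop :=
  det3 (vsub (P 1%nat) (P 0%nat)) (vsub (P 2%nat) (P 0%nat))
       (vsub (P 3%nat) (P 0%nat)) <> 0.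

Definition is_glb (E : R -> Prop) (m : R) : Prop :=
  (forall x, E x -> m <= x) /\ (forall b, (forall x, E x -> b <= x) -> b <= m).

Definition is_hausdorff_dist (A B : pt -> Prop) (d : R) : Prop :=
  is_glb (fun eps => 0 <= eps /\
            (forall a, A a -> exists b, B b /\ dist3 a b <= eps) /\
            (forall b, B b -> exists a, A a /\ dist3 a b <= eps)) d.

Definition is_inradius (A : pt -> Prop) (r : R) : Prop :=
  is_lub (fun rho => 0 <= rho /\ exists c : pt,
            forall x, dist3 x c <= rho -> A x) r.

Definition perm4 (s : nat -> nat) : Prop :=
  (forall i, (i < 4)%nat -> (s i < 4)%nat) /\
  (forall i j, (i < 4)%nat -> (j < 4)%nat -> s i = s j -> i = j).

Definition maxdev (P0 P1 : vertices) (s : nat -> nat) : R :=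
  Rmax (Rmax (dist3 (P0 0%nat) (P1 (s 0%nat))) (dist3 (P0 1%nat) (P1 (s 1%nat))))
       (Rmax (dist3 (P0 2%nat) (P1 (s 2%nat))) (dist3 (P0 3%nat) (P1 (s 3%nat)))).

Definition is_vertex_match_dist (P0 P1 : vertices) (m : R) : Prop :=
  (exists s, perm4 s /\ maxdev P0 P1 s = m) /\
  (forall s, perm4 s -> m <= maxdev P0 P1 s).

From Stdlib Require Import Reals Lra Lia Classical.
Open Scope R_scope.

(* Upper bound: for a permutation [s], the point [sum_i l_i P0_i] of [T0] lies within
   [max_i |P0_i - P1_(s i)|] of the point [sum_i l_i P1_(s i)] of [T1], and conversely.

   Lower bound: if [T0] contains a ball of radius [rho], every barycentric coordinate of
   [T0], being affine and [[0, 1]]-valued on that ball, is [1/(2 rho)]-Lipschitz.  At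
   Hausdorff distance [< eps], with [t = eps/(2 rho)], all [T0]-coordinates of the vertices
   of [T1] are [>= -t], and since [P0_i] is [eps]-close to a convex combination of the
   vertices of [T1], some vertex of [T1] has [i]-th coordinate [>= 1 - t].  For [t < 1/4]
   that vertex is unique, which defines a permutation, and its other coordinates are
   [O(t)], so it lies within [9 t diam T0] of [P0_i].  For [t >= 1/4] every permutation
   works, since all vertices lie in [B_R(0)]. *)

Definition vadd (p q : pt) : pt := (px p + px q, py p + py q, pz p + pz q).
Definition vscale (a : R) (p : pt) : pt := (a * px p, a * py p, a * pz p).

Lemma pt_ext (p q : pt) : px p = px q -> py p = py q -> pz p = pz q -> p = q.
Proof.
  destruct p as [[x y] z], q as [[x' y'] z']; unfold px, py, pz; simpl.
  intros -> -> ->; reflexivity.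
Qed.

Lemma dist3_norm3 (p q : pt) : dist3 p q = norm3 (vsub p q).
Proof. reflexivity. Qed.

Lemma norm3_nonneg (p : pt) : 0 <= norm3 p.
Proof. apply sqrt_pos. Qed.

Lemma dist3_nonneg (p q : pt) : 0 <= dist3 p q.
Proof. apply sqrt_pos. Qed.

Lemma dist3_sym (p q : pt) : dist3 p q = dist3 q p.
Proof. unfold dist3; f_equal; ring. Qed.

Lemma dist3_refl (p : pt) : dist3 p p = 0.
Proof.
  unfold dist3; replace ((px p - px p) ^ 2 + (py p - py p) ^ 2 + (pz p - pz p) ^ 2) with 0
    by ring.
  apply sqrt_0.
Qed.

Lemma norm3_scale (a : R) (p : pt) : norm3 (vscale a p) = Rabs a * norm3 p.
Proof.
  unfold norm3.
  replace (px (vscale a p) ^ 2 + py (vscale a p) ^ 2 + pz (vscale a p) ^ 2)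
    with (a ^ 2 * (px p ^ 2 + py p ^ 2 + pz p ^ 2)) by (unfold vscale, px, py, pz; simpl; ring).
  rewrite sqrt_mult_alt by nra.
  rewrite <- pow2_abs, sqrt_pow2 by apply Rabs_pos; reflexivity.
Qed.

Lemma norm3_triangle (p q : pt) : norm3 (vadd p q) <= norm3 p + norm3 q.
Proof.
  destruct p as [[x1 y1] z1], q as [[x2 y2] z2]; unfold norm3, vadd, px, py, pz; cbn [fst snd].
  set (A := x1 ^ 2 + y1 ^ 2 + z1 ^ 2); set (B := x2 ^ 2 + y2 ^ 2 + z2 ^ 2).
  set (dot := x1 * x2 + y1 * y2 + z1 * z2).
  assert (HA : 0 <= A) by (unfold A; nra).
  assert (HB : 0 <= B) by (unfold B; nra).
  assert (cauchy_schwarz : dot <= sqrt A * sqrt B).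
  { rewrite <- sqrt_mult_alt by exact HA.
    apply Rle_trans with (Rabs dot); [apply Rle_abs|].
    rewrite <- (sqrt_pow2 (Rabs dot)) by apply Rabs_pos; rewrite pow2_abs.
    apply sqrt_le_1_alt.
    (* Lagrange's identity *)
    assert (A * B - dot ^ 2 = (x1 * y2 - y1 * x2) ^ 2 + (x1 * z2 - z1 * x2) ^ 2
                              + (y1 * z2 - z1 * y2) ^ 2) by (unfold A, B, dot; ring).
    pose proof (pow2_ge_0 (x1 * y2 - y1 * x2)); pose proof (pow2_ge_0 (x1 * z2 - z1 * x2));
    pose proof (pow2_ge_0 (y1 * z2 - z1 * y2)); lra. }
  pose proof (sqrt_pos A); pose proof (sqrt_pos B).
  rewrite <- (sqrt_pow2 (sqrt A + sqrt B)) by lra.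
  apply sqrt_le_1_alt.
  replace ((sqrt A + sqrt B) ^ 2) with (sqrt A * sqrt A + sqrt B * sqrt B + 2 * (sqrt A * sqrt B))
    by ring.
  rewrite !sqrt_sqrt by assumption.
  unfold A, B, dot in *; nra.
Qed.

Lemma dist3_le_norm3 (p q : pt) : dist3 p q <= norm3 p + norm3 q.
Proof.
  replace (dist3 p q) with (norm3 (vadd p (vscale (-1) q))).
  - rewrite <- (Rmult_1_l (norm3 q)); rewrite <- Rabs_R1, <- Rabs_Ropp, <- norm3_scale.
    apply norm3_triangle.
  - rewrite dist3_norm3; f_equal; apply pt_ext; unfold vadd, vscale, vsub, px, py, pz; simpl; ring.
Qed.

Lemma dist3_eq0 (p q : pt) : dist3 p q = 0 -> p = q.
Proof.
  unfold dist3; intro H0.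
  assert (Hsq : forall u, u * u = 0 -> u = 0)
    by (intros u Hu; destruct (Rmult_integral u u Hu); assumption).
  pose proof (pow2_ge_0 (px p - px q)); pose proof (pow2_ge_0 (py p - py q));
  pose proof (pow2_ge_0 (pz p - pz q)).
  apply sqrt_eq_0 in H0; [|lra].
  apply pt_ext; apply Rminus_diag_uniq, Hsq; rewrite <- Rsqr_pow2 in *; unfold Rsqr in *; lra.
Qed.

Definition sum4 (f : nat -> R) : R := f 0%nat + f 1%nat + f 2%nat + f 3%nat.

Definition convex4 (l : nat -> R) : Prop :=
  (forall i, (i < 4)%nat -> 0 <= l i) /\ sum4 l = 1.

Definition comb (l : nat -> R) (P : vertices) : pt :=
  (sum4 (fun i => l i * px (P i)), sum4 (fun i => l i * py (P i)),
   sum4 (fun i => l i * pz (P i))).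

Definition kron (k i : nat) : R := if Nat.eq_dec k i then 1 else 0.

Lemma sum4_kron (k : nat) (f : nat -> R) : (k < 4)%nat ->
  sum4 (fun i => kron k i * f i) = f k.
Proof.
  intro Hk; unfold sum4, kron.
  destruct k as [|[|[|[|k]]]]; try lia; repeat (destruct Nat.eq_dec; try lia); ring.
Qed.

Lemma tetraP (P : vertices) (x : pt) : tetra P x <-> exists l, convex4 l /\ x = comb l P.
Proof.
  split.
  - intros [l [Hl [Hs [Hx [Hy Hz]]]]]; exists l; split; [split; assumption|].
    apply pt_ext; assumption.
  - intros [l [[Hl Hs] ->]]; exists l; repeat split; assumption.
Qed.

Lemma tetra_vertex (P : vertices) (k : nat) : (k < 4)%nat -> tetra P (P k).
Proof.
  intro Hk; apply tetraP; exists (kron k); split; [split|].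
  - intros i _; unfold kron; destruct Nat.eq_dec; lra.
  - rewrite <- (sum4_kron k (fun _ => 1)) by exact Hk; unfold sum4; ring.
  - apply pt_ext; unfold comb; cbn [px py pz fst snd]; rewrite sum4_kron; easy.
Qed.

Lemma convex4_sum_le (l f : nat -> R) (M : R) : convex4 l ->
  (forall i, (i < 4)%nat -> f i <= M) -> sum4 (fun i => l i * f i) <= M.
Proof.
  intros [Hl Hs] Hf.
  apply Rle_trans with (sum4 (fun i => l i * M)).
  - unfold sum4; repeat apply Rplus_le_compat; apply Rmult_le_compat_l;
      (apply Hl || apply Hf); lia.
  - unfold sum4 in *; replace (_ + _ + _ + _) with ((l 0%nat + l 1%nat + l 2%nat + l 3%nat) * M)
      by ring.
    rewrite Hs; lra.
Qed.

Lemma convex4_sum_le_term (l f : nat -> R) : convex4 l ->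
  exists j, (j < 4)%nat /\ sum4 (fun i => l i * f i) <= f j.
Proof.
  intro Hl; apply NNPP; intro Hnone.
  assert (Hlt : forall j, (j < 4)%nat -> f j < sum4 (fun i => l i * f i)).
  { intros j Hj; apply Rnot_le_lt; intro Hle; apply Hnone; exists j; split; assumption. }
  set (g := Rmax (Rmax (f 0%nat) (f 1%nat)) (Rmax (f 2%nat) (f 3%nat))).
  assert (Hg : g < sum4 (fun i => l i * f i))
    by (unfold g; repeat apply Rmax_lub_lt; apply Hlt; lia).
  assert (Hfg : forall i, (i < 4)%nat -> f i <= g).
  { intros i Hi; unfold g.
    destruct i as [|[|[|[|i]]]]; try lia;
      eauto using Rle_trans, Rmax_l, Rmax_r. }
  pose proof (convex4_sum_le l f g Hl Hfg); lra.
Qed.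

Lemma comb_vadd_expand (c : nat -> R) (V : vertices) :
  comb c V = vadd (vadd (vadd (vscale (c 0%nat) (V 0%nat)) (vscale (c 1%nat) (V 1%nat)))
                        (vscale (c 2%nat) (V 2%nat))) (vscale (c 3%nat) (V 3%nat)).
Proof. apply pt_ext; unfold comb, sum4, vadd, vscale; cbn [px py pz fst snd]; ring. Qed.

Lemma norm3_comb (c : nat -> R) (V : vertices) :
  norm3 (comb c V) <= sum4 (fun i => Rabs (c i) * norm3 (V i)).
Proof.
  rewrite comb_vadd_expand; unfold sum4; rewrite <- !norm3_scale.
  repeat (eapply Rle_trans; [apply norm3_triangle|]; apply Rplus_le_compat_r).
  apply Rle_refl.
Qed.

Lemma vsub_comb (l : nat -> R) (P Q : vertices) :
  vsub (comb l P) (comb l Q) = comb l (fun i => vsub (P i) (Q i)).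
Proof. apply pt_ext; unfold comb, sum4, vsub; cbn [px py pz fst snd]; ring. Qed.

Lemma dist3_comb_le (l : nat -> R) (P Q : vertices) (M : R) : convex4 l ->
  (forall i, (i < 4)%nat -> dist3 (P i) (Q i) <= M) -> dist3 (comb l P) (comb l Q) <= M.
Proof.
  intros Hl HM.
  rewrite dist3_norm3, vsub_comb; eapply Rle_trans; [apply norm3_comb|].
  replace (sum4 _) with (sum4 (fun i => l i * dist3 (P i) (Q i))).
  - exact (convex4_sum_le _ _ M Hl HM).
  - destruct Hl as [Hl _]; unfold sum4; rewrite !(Rabs_pos_eq (l _)) by (apply Hl; lia).
    reflexivity.
Qed.

Lemma sum4_perm (s : nat -> nat) (f : nat -> R) : perm4 s -> sum4 (fun i => f (s i)) = sum4 f.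
Proof.
  intros [Hrange Hinj]; unfold sum4.
  assert (H01 : s 0%nat <> s 1%nat) by (intro E; apply Hinj in E; lia).
  assert (H02 : s 0%nat <> s 2%nat) by (intro E; apply Hinj in E; lia).
  assert (H03 : s 0%nat <> s 3%nat) by (intro E; apply Hinj in E; lia).
  assert (H12 : s 1%nat <> s 2%nat) by (intro E; apply Hinj in E; lia).
  assert (H13 : s 1%nat <> s 3%nat) by (intro E; apply Hinj in E; lia).
  assert (H23 : s 2%nat <> s 3%nat) by (intro E; apply Hinj in E; lia).
  pose proof (Hrange 0%nat ltac:(lia)); pose proof (Hrange 1%nat ltac:(lia));
  pose proof (Hrange 2%nat ltac:(lia)); pose proof (Hrange 3%nat ltac:(lia)).
  destruct (s 0%nat) as [|[|[|[|]]]]; try lia;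
  destruct (s 1%nat) as [|[|[|[|]]]]; try lia;
  destruct (s 2%nat) as [|[|[|[|]]]]; try lia;
  destruct (s 3%nat) as [|[|[|[|]]]]; try lia; ring.
Qed.

Lemma tetra_perm (P : vertices) (s : nat -> nat) (x : pt) : perm4 s ->
  tetra P x -> tetra (fun i => P (s i)) x.
Proof.
  intros Hs Hx; apply tetraP in Hx as [l [[Hl Hsum] ->]].
  apply tetraP; exists (fun i => l (s i)); split; [split|].
  - intros i Hi; apply Hl, (proj1 Hs), Hi.
  - rewrite (sum4_perm s l Hs); exact Hsum.
  - apply pt_ext; unfold comb; cbn [px py pz fst snd];
      rewrite (sum4_perm s (fun j => l j * _ (P j))) by exact Hs; reflexivity.
Qed.

(* Pushing the weights forward along [s] only needs [s] to map into the index set. *)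
Lemma tetra_reindex (P : vertices) (s : nat -> nat) (x : pt) :
  (forall i, (i < 4)%nat -> (s i < 4)%nat) -> tetra (fun i => P (s i)) x -> tetra P x.
Proof.
  intros Hs Hx; apply tetraP in Hx as [l [[Hl Hsum] ->]].
  set (mu := fun j => sum4 (fun i => l i * kron (s i) j)).
  assert (Hpush : forall f : nat -> R,
             sum4 (fun j => mu j * f j) = sum4 (fun i => l i * f (s i))).
  { intro f; transitivity (sum4 (fun i => l i * sum4 (fun j => kron (s i) j * f j))).
    - unfold mu, sum4; ring.
    - unfold sum4 at 1 3; rewrite !sum4_kron by (apply Hs; lia); reflexivity. }
  apply tetraP; exists mu; split; [split|].
  - intros j _; unfold mu, sum4, kron; pose proof (Hl 0%nat ltac:(lia));
      pose proof (Hl 1%nat ltac:(lia)); pose proof (Hl 2%nat ltac:(lia));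
      pose proof (Hl 3%nat ltac:(lia)); repeat destruct Nat.eq_dec; lra.
  - rewrite <- Hsum; specialize (Hpush (fun _ => 1)); unfold sum4 in *; lra.
  - apply pt_ext; unfold comb; cbn [px py pz fst snd]; rewrite Hpush; reflexivity.
Qed.

Lemma maxdev_ge (P Q : vertices) (s : nat -> nat) (i : nat) : (i < 4)%nat ->
  dist3 (P i) (Q (s i)) <= maxdev P Q s.
Proof.
  intro Hi; unfold maxdev.
  destruct i as [|[|[|[|i]]]]; try lia; eauto using Rle_trans, Rmax_l, Rmax_r.
Qed.

Lemma maxdev_le (P Q : vertices) (s : nat -> nat) (M : R) :
  (forall i, (i < 4)%nat -> dist3 (P i) (Q (s i)) <= M) -> maxdev P Q s <= M.
Proof. intro HM; unfold maxdev; repeat apply Rmax_lub; apply HM; lia. Qed.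

Lemma tetra_near (P Q : vertices) (M : R) (x : pt) :
  (forall i, (i < 4)%nat -> dist3 (P i) (Q i) <= M) ->
  tetra P x -> exists y, tetra Q y /\ dist3 x y <= M.
Proof.
  intros HM Hx; apply tetraP in Hx as [l [Hl ->]].
  exists (comb l Q); split.
  - apply tetraP; exists l; split; [exact Hl | reflexivity].
  - exact (dist3_comb_le l P Q M Hl HM).
Qed.

Theorem hausdorff_le_maxdev (P Q : vertices) (s : nat -> nat) (d : R) : perm4 s ->
  is_hausdorff_dist (tetra P) (tetra Q) d -> d <= maxdev P Q s.
Proof.
  intros Hs [Hlow _]; apply Hlow; repeat split.
  - apply Rle_trans with (dist3 (P 0%nat) (Q (s 0%nat)));
      [apply dist3_nonneg | apply maxdev_ge; lia].
  - intros a Ha.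
    destruct (tetra_near P (fun i => Q (s i)) (maxdev P Q s) a) as [b [Hb Hab]];
      [intros; apply maxdev_ge; assumption | assumption |].
    exists b; split; [exact (tetra_reindex Q s b (proj1 Hs) Hb) | exact Hab].
  - intros b Hb.
    destruct (tetra_near (fun i => Q (s i)) P (maxdev P Q s) b) as [a [Ha Hab]].
    + intros i Hi; rewrite dist3_sym; apply maxdev_ge, Hi.
    + exact (tetra_perm Q s b Hs Hb).
    + exists a; split; [exact Ha | rewrite dist3_sym; exact Hab].
Qed.

Definition tetra_det (P : vertices) : R :=
  det3 (vsub (P 1%nat) (P 0%nat)) (vsub (P 2%nat) (P 0%nat)) (vsub (P 3%nat) (P 0%nat)).

(* Cramer's rule for the coordinates of [x - P 0] in the basis [P k - P 0], k = 1, 2, 3. *)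
Definition bary (P : vertices) (k : nat) (x : pt) : R :=
  let e1 := vsub (P 1%nat) (P 0%nat) in
  let e2 := vsub (P 2%nat) (P 0%nat) in
  let e3 := vsub (P 3%nat) (P 0%nat) in
  let w := vsub x (P 0%nat) in
  match k with
  | 0%nat => 1 - (det3 w e2 e3 + det3 e1 w e3 + det3 e1 e2 w) / tetra_det P
  | 1%nat => det3 w e2 e3 / tetra_det P
  | 2%nat => det3 e1 w e3 / tetra_det P
  | _ => det3 e1 e2 w / tetra_det P
  end.

Lemma bary_sum (P : vertices) (x : pt) : sum4 (fun k => bary P k x) = 1.
Proof. unfold sum4, bary; cbv zeta; lra. Qed.

Lemma comb_bary (P : vertices) (x : pt) : nondegenerate P ->
  x = comb (fun k => bary P k x) P.
Proof.
  intro HD; apply pt_ext; unfold comb, sum4, bary, tetra_det, nondegenerate, det3, vsub in *;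
    cbn [px py pz fst snd] in *; field; exact HD.
Qed.

Lemma bary_comb (P Q : vertices) (l : nat -> R) (k : nat) : nondegenerate P -> sum4 l = 1 ->
  bary P k (comb l Q) = sum4 (fun j => l j * bary P k (Q j)).
Proof.
  intros HD Hs; unfold nondegenerate in HD; fold (tetra_det P) in HD.
  unfold sum4 in Hs; unfold comb, sum4.
  replace (l 0%nat) with (1 - l 1%nat - l 2%nat - l 3%nat) by lra.
  destruct k as [|[|[|k]]]; unfold bary, det3, vsub; cbn [px py pz fst snd]; field; exact HD.
Qed.

Lemma bary_vertex (P : vertices) (k j : nat) : nondegenerate P -> (k < 4)%nat -> (j < 4)%nat ->
  bary P k (P j) = kron k j.
Proof.
  intros HD Hk Hj; unfold nondegenerate in HD; fold (tetra_det P) in HD; unfold kron.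
  destruct k as [|[|[|[|k]]]]; try lia; destruct j as [|[|[|[|j]]]]; try lia;
    destruct Nat.eq_dec; try lia;
    unfold bary, tetra_det in *; unfold det3, vsub in *; cbn [px py pz fst snd] in *;
    field; exact HD.
Qed.

Lemma bary_comb_self (P : vertices) (l : nat -> R) (k : nat) :
  nondegenerate P -> (k < 4)%nat -> sum4 l = 1 -> bary P k (comb l P) = l k.
Proof.
  intros HD Hk Hs; rewrite bary_comb by assumption.
  rewrite <- (sum4_kron k l Hk); unfold sum4; rewrite !bary_vertex by (assumption || lia).
  unfold kron; repeat destruct Nat.eq_dec; ring.
Qed.

Lemma bary_tetra (P : vertices) (k : nat) (x : pt) : nondegenerate P -> (k < 4)%nat ->
  tetra P x -> 0 <= bary P k x <= 1.
Proof.
  intros HD Hk Hx; apply tetraP in Hx as [l [[Hl Hs] ->]].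
  rewrite bary_comb_self by assumption.
  unfold sum4 in Hs; pose proof (Hl 0%nat ltac:(lia)); pose proof (Hl 1%nat ltac:(lia));
    pose proof (Hl 2%nat ltac:(lia)); pose proof (Hl 3%nat ltac:(lia)).
  destruct k as [|[|[|[|k]]]]; try lia; lra.
Qed.

Lemma bary_affine (P : vertices) (k : nat) (p x y : pt) (a : R) : nondegenerate P ->
  bary P k (vadd p (vscale a (vsub x y))) = bary P k p + a * (bary P k x - bary P k y).
Proof.
  intro HD; unfold nondegenerate in HD; fold (tetra_det P) in HD.
  destruct k as [|[|[|k]]]; unfold bary, vadd, vscale, det3, vsub; cbn [px py pz fst snd];
    field; exact HD.
Qed.

Lemma dist3_vadd_scale (c v : pt) (a : R) : dist3 (vadd c (vscale a v)) c = Rabs a * norm3 v.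
Proof.
  rewrite dist3_norm3, <- norm3_scale; f_equal.
  apply pt_ext; unfold vadd, vscale, vsub; cbn [px py pz fst snd]; ring.
Qed.

Lemma bary_lipschitz (P : vertices) (c : pt) (rho : R) (k : nat) (x y : pt) :
  nondegenerate P -> (k < 4)%nat -> 0 < rho ->
  (forall z, dist3 z c <= rho -> tetra P z) ->
  Rabs (bary P k x - bary P k y) <= dist3 x y / (2 * rho).
Proof.
  intros HD Hk Hrho Hball.
  destruct (Req_dec (dist3 x y) 0) as [Hxy | Hxy].
  { apply dist3_eq0 in Hxy as ->; rewrite dist3_refl, Rminus_diag, Rabs_R0.
    unfold Rdiv; rewrite Rmult_0_l; lra. }
  pose proof (dist3_nonneg x y).
  set (a := rho / dist3 x y).
  assert (Ha : 0 < a) by (apply Rdiv_lt_0_compat; lra).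
  assert (Hsphere : forall b, Rabs b = a -> 0 <= bary P k (vadd c (vscale b (vsub x y))) <= 1).
  { intros b Hb; apply bary_tetra; [assumption | assumption | apply Hball].
    rewrite dist3_vadd_scale, Hb, <- dist3_norm3; unfold a; right; field; exact Hxy. }
  pose proof (Hsphere a (Rabs_pos_eq a (Rlt_le _ _ Ha))) as Hplus.
  pose proof (Hsphere (- a) ltac:(rewrite Rabs_Ropp; apply Rabs_pos_eq; lra)) as Hminus.
  rewrite bary_affine in Hplus, Hminus by exact HD.
  replace (dist3 x y / (2 * rho)) with (/ (2 * a)) by (unfold a; field; lra).
  apply Rabs_le; split; apply (Rmult_le_reg_l (2 * a)); try lra.
  - replace (2 * a * - / (2 * a)) with (-1) by (field; lra); lra.
  - rewrite Rinv_r by lra; lra.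
Qed.

Lemma vsub_comb_const (l : nat -> R) (P : vertices) (q : pt) : sum4 l = 1 ->
  vsub (comb l P) q = comb l (fun k => vsub (P k) q).
Proof.
  intro Hs; unfold sum4 in Hs; apply pt_ext; unfold comb, sum4, vsub; cbn [px py pz fst snd];
    replace (l 0%nat) with (1 - l 1%nat - l 2%nat - l 3%nat) by lra; ring.
Qed.

Lemma dist3_vertex_bary (P : vertices) (i : nat) (x : pt) : nondegenerate P ->
  dist3 x (P i) <= sum4 (fun k => Rabs (bary P k x) * dist3 (P k) (P i)).
Proof.
  intro HD; rewrite (comb_bary P x HD) at 1.
  rewrite dist3_norm3, vsub_comb_const by apply bary_sum.
  apply norm3_comb.
Qed.

(* The three other coordinates lie in [-t, 3t]. *)
Lemma dist3_vertex_of_bary (P : vertices) (i : nat) (x : pt) (t B : R) :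
  nondegenerate P -> (i < 4)%nat -> 0 <= t ->
  (forall k, (k < 4)%nat -> dist3 (P k) (P i) <= B) ->
  (forall k, (k < 4)%nat -> - t <= bary P k x) -> 1 - t <= bary P i x ->
  dist3 x (P i) <= 9 * t * B.
Proof.
  intros HD Hi Ht HB Hlow Hhigh.
  assert (Hterm : forall k, (k < 4)%nat -> Rabs (bary P k x) * dist3 (P k) (P i) <= 3 * t * B).
  { intros k Hk; destruct (Nat.eq_dec k i) as [-> | Hne].
    - pose proof (HB i Hi); rewrite dist3_refl, Rmult_0_r in *; nra.
    - apply Rmult_le_compat; [apply Rabs_pos | apply dist3_nonneg | | apply HB, Hk].
      apply Rabs_le; pose proof (bary_sum P x); unfold sum4 in *.
      pose proof (Hlow 0%nat ltac:(lia)); pose proof (Hlow 1%nat ltac:(lia));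
        pose proof (Hlow 2%nat ltac:(lia)); pose proof (Hlow 3%nat ltac:(lia)).
      destruct k as [|[|[|[|k]]]]; try lia; destruct i as [|[|[|[|i]]]]; try lia; lra. }
  assert (Hself : Rabs (bary P i x) * dist3 (P i) (P i) = 0) by (rewrite dist3_refl; ring).
  eapply Rle_trans; [apply dist3_vertex_bary, HD|].
  unfold sum4; pose proof (Hterm 0%nat ltac:(lia)); pose proof (Hterm 1%nat ltac:(lia));
    pose proof (Hterm 2%nat ltac:(lia)); pose proof (Hterm 3%nat ltac:(lia)).
  destruct i as [|[|[|[|i]]]]; try lia; lra.
Qed.

Lemma bary_large_unique (P : vertices) (x : pt) (t : R) (i j : nat) : t < 1 / 4 ->
  (forall k, (k < 4)%nat -> - t <= bary P k x) -> (i < 4)%nat -> (j < 4)%nat ->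
  1 - t <= bary P i x -> 1 - t <= bary P j x -> i = j.
Proof.
  intros Ht Hlow Hi Hj Hbi Hbj; pose proof (bary_sum P x); unfold sum4 in *.
  pose proof (Hlow 0%nat ltac:(lia)); pose proof (Hlow 1%nat ltac:(lia));
    pose proof (Hlow 2%nat ltac:(lia)); pose proof (Hlow 3%nat ltac:(lia)).
  destruct i as [|[|[|[|i]]]]; try lia; destruct j as [|[|[|[|j]]]]; try lia; lra.
Qed.

Section Matching.

Variables (P Q : vertices) (c : pt) (rho eps : R).
Hypothesis HD : nondegenerate P.
Hypothesis Hrho : 0 < rho.
Hypothesis Hball : forall z, dist3 z c <= rho -> tetra P z.
Hypothesis HPQ : forall a, tetra P a -> exists b, tetra Q b /\ dist3 a b <= eps.
Hypothesis HQP : forall b, tetra Q b -> exists a, tetra P a /\ dist3 a b <= eps.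

Lemma bary_diff_near (k : nat) (x y : pt) : (k < 4)%nat -> dist3 x y <= eps ->
  - (eps / (2 * rho)) <= bary P k x - bary P k y <= eps / (2 * rho).
Proof.
  intros Hk Hxy.
  assert (Hlip : Rabs (bary P k x - bary P k y) <= eps / (2 * rho)).
  { eapply Rle_trans; [exact (bary_lipschitz P c rho k x y HD Hk Hrho Hball)|].
    apply Rmult_le_compat_r; [apply Rlt_le, Rinv_0_lt_compat; lra | exact Hxy]. }
  pose proof (Rle_abs (bary P k x - bary P k y)).
  pose proof (Rle_abs (- (bary P k x - bary P k y))); rewrite Rabs_Ropp in *; lra.
Qed.

Lemma bary_vertices_lower (k j : nat) : (k < 4)%nat -> (j < 4)%nat ->
  - (eps / (2 * rho)) <= bary P k (Q j).
Proof.
  intros Hk Hj; destruct (HQP (Q j) (tetra_vertex Q j Hj)) as [a [Ha Hdist]].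
  pose proof (bary_tetra P k a HD Hk Ha); pose proof (bary_diff_near k a (Q j) Hk Hdist); lra.
Qed.

Lemma bary_vertices_upper (i : nat) : (i < 4)%nat ->
  exists j, (j < 4)%nat /\ 1 - eps / (2 * rho) <= bary P i (Q j).
Proof.
  intro Hi; destruct (HPQ (P i) (tetra_vertex P i Hi)) as [b [Hb Hdist]].
  pose proof (bary_diff_near i (P i) b Hi Hdist) as Hnear.
  rewrite bary_vertex in Hnear by assumption; unfold kron in Hnear; destruct Nat.eq_dec; [|lia].
  apply tetraP in Hb as [mu [Hmu ->]].
  rewrite bary_comb in Hnear by (assumption || apply (proj2 Hmu)).
  destruct (convex4_sum_le_term mu (fun j => bary P i (Q j)) Hmu) as [j [Hj Hle]].
  exists j; split; [exact Hj | lra].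
Qed.

Lemma perm_bary_large : eps / (2 * rho) < 1 / 4 ->
  exists s, perm4 s /\
    forall i, (i < 4)%nat -> 1 - eps / (2 * rho) <= bary P i (Q (s i)).
Proof.
  intro Hsmall.
  destruct (bary_vertices_upper 0 ltac:(lia)) as [j0 [Hj0 B0]].
  destruct (bary_vertices_upper 1 ltac:(lia)) as [j1 [Hj1 B1]].
  destruct (bary_vertices_upper 2 ltac:(lia)) as [j2 [Hj2 B2]].
  destruct (bary_vertices_upper 3 ltac:(lia)) as [j3 [Hj3 B3]].
  set (s := fun n => match n with 0%nat => j0 | 1%nat => j1 | 2%nat => j2 | _ => j3 end).
  assert (Hlarge : forall i, (i < 4)%nat -> 1 - eps / (2 * rho) <= bary P i (Q (s i)))
    by (intros [|[|[|[|i]]]] Hi; try lia; assumption).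
  exists s; split; [split|exact Hlarge].
  - intros [|[|[|[|i]]]] Hi; simpl; lia.
  - intros i k Hi Hk Hsik.
    apply (bary_large_unique P (Q (s i)) (eps / (2 * rho))); try assumption.
    + intros m Hm; apply bary_vertices_lower; [exact Hm|].
      destruct i as [|[|[|[|i]]]]; simpl; lia.
    + now apply Hlarge.
    + rewrite Hsik; now apply Hlarge.
Qed.

Lemma maxdev_le_hausdorff (Rad : R) : 0 <= eps ->
  (forall i, (i < 4)%nat -> norm3 (P i) < Rad) -> (forall j, (j < 4)%nat -> norm3 (Q j) < Rad) ->
  exists s, perm4 s /\ maxdev P Q s <= 9 * Rad * eps / rho.
Proof.
  intros Heps HP HQ.
  assert (HRad : 0 < Rad) by (pose proof (norm3_nonneg (P 0%nat)); pose proof (HP 0%nat ltac:(lia)); lra).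
  assert (Ht : 0 <= eps / (2 * rho)) by (apply Rmult_le_pos; [lra | apply Rlt_le, Rinv_0_lt_compat; lra]).
  assert (Hbound : 9 * Rad * eps / rho = 9 * (eps / (2 * rho)) * (2 * Rad)) by (field; lra).
  destruct (Rlt_le_dec (eps / (2 * rho)) (1 / 4)) as [Hsmall | Hlarge].
  - destruct (perm_bary_large Hsmall) as [s [Hs Hbary]].
    exists s; split; [exact Hs|]; rewrite Hbound; apply maxdev_le; intros i Hi.
    rewrite dist3_sym; apply dist3_vertex_of_bary; try assumption.
    + intros k Hk; pose proof (dist3_le_norm3 (P k) (P i)); pose proof (HP k Hk);
        pose proof (HP i Hi); lra.
    + intros k Hk; apply bary_vertices_lower; [exact Hk | apply (proj1 Hs), Hi].
    + now apply Hbary.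
  - exists (fun i => i); split; [split; auto|].
    rewrite Hbound; apply maxdev_le; intros i Hi.
    pose proof (dist3_le_norm3 (P i) (Q i)); pose proof (HP i Hi); pose proof (HQ i Hi); nra.
Qed.

End Matching.

Lemma hausdorff_nonneg (A B : pt -> Prop) (d : R) : is_hausdorff_dist A B d -> 0 <= d.
Proof. intros [_ Hgreatest]; apply Hgreatest; intros eps [Heps _]; exact Heps. Qed.

Lemma hausdorff_near (A B : pt -> Prop) (d eps : R) : is_hausdorff_dist A B d -> d < eps ->
  (forall a, A a -> exists b, B b /\ dist3 a b <= eps) /\
  (forall b, B b -> exists a, A a /\ dist3 a b <= eps).
Proof.
  intros [_ Hgreatest] Hd.
  destruct (classic (exists e, e < eps /\ 0 <= e /\
              (forall a, A a -> exists b, B b /\ dist3 a b <= e) /\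
              (forall b, B b -> exists a, A a /\ dist3 a b <= e)))
    as [[e [He [_ [HAB HBA]]]] | Hnone].
  - split.
    + intros a Ha; destruct (HAB a Ha) as [b [Hb Hab]]; exists b; split; [exact Hb | lra].
    + intros b Hb; destruct (HBA b Hb) as [a [Ha Hab]]; exists a; split; [exact Ha | lra].
  - exfalso; enough (eps <= d) by lra.
    apply Hgreatest; intros e He; apply Rnot_lt_le; intro Hlt; apply Hnone; exists e; tauto.
Qed.

Lemma Rle_mult_of_forall_gt (m d K : R) : 0 < K ->
  (forall eps, d < eps -> m <= K * eps) -> m <= K * d.
Proof.
  intros HK Hgt; apply Rle_plus_epsilon; intros e He.
  replace (K * d + e) with (K * (d + e / K)) by (field; lra).
  apply Hgt; enough (0 < e / K) by lra; apply Rdiv_lt_0_compat; assumption.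
Qed.

Lemma inradius_ball (S : pt -> Prop) (rho0 r : R) : is_inradius S rho0 -> r < rho0 ->
  exists rho c, r < rho /\ forall x, dist3 x c <= rho -> S x.
Proof.
  intros [_ Hleast] Hr; apply NNPP; intro Hnone.
  enough (rho0 <= r) by lra.
  apply Hleast; intros rho [_ [c Hc]]; apply Rnot_lt_le; intro Hlt.
  apply Hnone; exists rho, c; split; assumption.
Qed.

Lemma vertex_match_le_hausdorff (P Q : vertices) (c : pt) (rho Rad d m : R) :
  nondegenerate P -> 0 < rho -> (forall z, dist3 z c <= rho -> tetra P z) ->
  (forall x, tetra P x -> norm3 x < Rad) -> (forall x, tetra Q x -> norm3 x < Rad) ->
  is_hausdorff_dist (tetra P) (tetra Q) d -> is_vertex_match_dist P Q m ->
  m <= 9 * Rad / rho * d.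
Proof.
  intros HD Hrho Hball HP HQ Hd [_ Hmin].
  assert (HRad : 0 < Rad)
    by (pose proof (norm3_nonneg (P 0%nat)); pose proof (HP _ (tetra_vertex P 0 ltac:(lia))); lra).
  apply Rle_mult_of_forall_gt; [apply Rdiv_lt_0_compat; lra|]; intros eps Heps.
  pose proof (hausdorff_nonneg _ _ _ Hd).
  destruct (hausdorff_near _ _ _ _ Hd Heps) as [HPQ HQP].
  destruct (maxdev_le_hausdorff P Q c rho eps HD Hrho Hball HPQ HQP Rad) as [s [Hs Hle]];
    [lra | intros i Hi; apply HP, tetra_vertex, Hi | intros j Hj; apply HQ, tetra_vertex, Hj |].
  pose proof (Hmin s Hs); replace (9 * Rad / rho * eps) with (9 * Rad * eps / rho) by (field; lra).
  lra.
Qed.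

Theorem mainTheorem5 :
  (forall (P0 P1 : vertices) (d m : R),
      nondegenerate P0 -> nondegenerate P1 ->
      is_hausdorff_dist (tetra P0) (tetra P1) d ->
      is_vertex_match_dist P0 P1 m ->
      d <= m) /\
  (forall Rad r1 : R, 0 < r1 ->
     exists A1 : R, 0 < A1 /\
       forall (P0 P1 : vertices) (d m : R),
         nondegenerate P0 -> nondegenerate P1 ->
         (forall x, tetra P0 x -> norm3 x < Rad) ->
         (forall x, tetra P1 x -> norm3 x < Rad) ->
         (exists rho, is_inradius (tetra P0) rho /\ r1 < rho) ->
         (exists rho, is_inradius (tetra P1) rho /\ r1 < rho) ->
         is_hausdorff_dist (tetra P0) (tetra P1) d ->
         is_vertex_match_dist P0 P1 m ->
         m <= A1 * d).
Proof.
  split.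
  - intros P0 P1 d m _ _ Hd [[s [Hs <-]] _]; exact (hausdorff_le_maxdev P0 P1 s d Hs Hd).
  - intros Rad r1 Hr1; exists (9 * Rmax Rad 1 / r1); split.
    { apply Rdiv_lt_0_compat; [pose proof (Rmax_r Rad 1) |]; lra. }
    intros P0 P1 d m HD0 _ HP0 HP1 [rho0 [Hin Hr1rho0]] _ Hd Hm.
    destruct (inradius_ball _ _ _ Hin Hr1rho0) as [rho [c [Hr1rho Hball]]].
    pose proof (vertex_match_le_hausdorff P0 P1 c rho Rad d m HD0 ltac:(lra) Hball HP0 HP1 Hd Hm).
    pose proof (hausdorff_nonneg _ _ _ Hd).
    pose proof (norm3_nonneg (P0 0%nat)); pose proof (HP0 _ (tetra_vertex P0 0 ltac:(lia))).
    assert (Hconst : 9 * Rad / rho <= 9 * Rmax Rad 1 / r1).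
    { unfold Rdiv; apply Rmult_le_compat; try lra.
      - apply Rlt_le, Rinv_0_lt_compat; lra.
      - pose proof (Rmax_l Rad 1); lra.
      - apply Rinv_le_contravar; lra. }
    apply Rle_trans with (9 * Rad / rho * d); [assumption | apply Rmult_le_compat_r; assumption].
Qed.
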